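(* The map $R$ has infinite topological entropy: $h(R)=\infty$.
   Context: Define $\rho$ on binary words: for $b=b_1b_2\dots$, $\rho(b)$ is obtained by deleting every digit $b_n=0$ and replacing every $b_n=1$ by $0$ if $n$ is odd and by $1$ if $n$ is even. For $x\in(0,1]$ let $\beta(x)$ be the unique binary expansion of $x$ with infinitely many $1$'s. Define $R:[0,1]\to[0,1]$ by $R(0)=2/3$ and, for $x\in(0,1]$, $R(x)=\sum_{n\ge1}c_n2^{-n}$ where $c=\rho(\beta(x))$. The topological entropy (Bowen–Dinaburg definition, used here for a not necessarily continuous map) is $h(R)=\lim_{\varepsilon\to0}\limsup_{n\to\infty}\frac1n\log r(n,\varepsilon)$, where $r(n,\varepsilon)$ is the maximal cardinality of a subset of $[0,1]$ whose distinct points are at distance $\ge\varepsilon$ in the metric $d_n(x,y)=\max_{0\le i\le n}|R^i(x)-R^i(y)|$. *)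

From HB Require Import structures.
From mathcomp Require Import all_boot all_order all_algebra.
From mathcomp Require Import all_classical all_reals all_analysis.
Set Implicit Arguments. Unset Strict Implicit. Unset Printing Implicit Defensive.
Import Order.TTheory GRing.Theory Num.Theory.
Import numFieldNormedType.Exports.
Local Open Scope classical_set_scope.
Local Open Scope ring_scope.

(* Binary words b = b_1 b_2 ... are encoded as b : nat -> bool with
   b k = b_{k+1} (0-based indexing). *)

(* rho: the n-th letter (0-based) of rho(b) comes from the (n+1)-th digit 1
   of b, at 0-based position p; 1-based position p+1 is odd iff p is even,
   giving 0 (= false), and even iff p is odd, giving 1 (= true).  So the
   letter equals [odd p].  (For b with infinitely many 1's, rho(b) is an
   infinite word, which is the only case used.) *)
Definition rho (b : nat -> bool) : nat -> bool :=
  fun n => `[< exists p : nat, [/\ b p, (\sum_(i < p) b i)%N = n & odd p] >].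

Definition bin_val {R : realType} (c : nat -> bool) : R :=
  limn (fun N : nat => \sum_(k < N) ((c k)%:R / 2 ^+ k.+1 : R)).

Definition nonterm_expansion {R : realType} (x : R) (b : nat -> bool) : Prop :=
  (forall N : nat, exists n : nat, (N <= n)%N /\ b n) /\
  (fun N : nat => \sum_(k < N) ((b k)%:R / 2 ^+ k.+1 : R)) @ \oo --> x.

Definition beta {R : realType} (x : R) : nat -> bool :=
  xget (fun _ => false) (nonterm_expansion x).

Definition Rmap {R : realType} (x : R) : R :=
  if x == 0 then 2 / 3 else bin_val (rho (beta x)).

Definition dn {R : realType} (n : nat) (x y : R) : R :=
  \big[Num.max/0]_(i < n.+1) `|iter i Rmap x - iter i Rmap y|.

Definition separated {R : realType} (n : nat) (eps : R) (S : seq R) : Prop :=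
  [/\ uniq S, (forall x, x \in S -> 0 <= x <= 1) &
      (forall x y, x \in S -> y \in S -> x != y -> eps <= dn n x y)].

Definition r_sep {R : realType} (n : nat) (eps : R) : \bar R :=
  ereal_sup [set ((size S)%:R)%:E | S in [set S | separated n eps S]].

Definition growth {R : realType} (eps : R) : \bar R :=
  limn_esup (fun n : nat => ((n%:R)^-1)%:E * lne (r_sep n eps))%E.

From mathcomp Require Import all_boot all_order all_algebra.
From mathcomp Require Import all_classical all_reals all_analysis.
Import Order.TTheory GRing.Theory Num.Theory.
Import numFieldNormedType.Exports.
Local Open Scope classical_set_scope.
Local Open Scope ring_scope.
From mathcomp Require Import zify ring lra.
Set Implicit Arguments. Unset Strict Implicit. Unset Printing Implicit Defensive.

(* Fix K >= 1 and n.  To every f : {0..n} -> {0..K-1} we attach a point of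
   [0,1] whose binary expansion is the word [code_word f n 0]: it starts with
   2 f(0) + 2 zeros followed by "10", and then encodes, letter by letter, the
   expansion of the point attached to f(1), ..., f(n), each letter t being
   written as the pair (~~ t, t).  The map rho exactly undoes this encoding,
   so the i-th iterate of R sends the point of f to a number whose expansion
   starts with 2 f(i) + 2 zeros, hence lies in [2^-(2f(i)+3), 2^-(2f(i)+2)].
   Two codes differing at time i thus give points 2^-(2K+2)-apart in d_n, so
   r(n, eps) >= K^(n+1) for eps <= 2^-(2K+2), the growth rate at such eps is
   at least ln K, and K is arbitrary. *)

Definition inf_ones (w : nat -> bool) : Prop :=
  forall N, exists n, (N <= n)%N /\ w n.

(* Letter t_j is encoded as the pair (~~ t_j, t_j): exactly one 1 per pair,
   sitting at an odd position iff t_j is true, which is what rho reads. *)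
Definition pair_code (t : nat -> bool) : nat -> bool :=
  fun k => if odd k then t k./2 else ~~ t k./2.

Lemma count_pair_code t j : (\sum_(i < j.*2) pair_code t i = j)%N.
Proof.
elim: j => [|j IH]; first by rewrite big_ord0.
rewrite doubleS !big_ord_recr /= IH /pair_code /=.
rewrite odd_double uphalf_double half_double.
by case: (t j); rewrite ?addn0 ?addn1.
Qed.

Lemma count_pair_code_odd t j :
  (\sum_(i < j.*2.+1) pair_code t i = j + ~~ t j)%N.
Proof.
by rewrite big_ord_recr /= count_pair_code /pair_code odd_double half_double.
Qed.

Lemma pair_code_inf_ones t : inf_ones (pair_code t).
Proof.
move=> N; exists (N.*2 + t N)%N; split; first lia.
rewrite /pair_code oddD odd_double halfD odd_double /= half_double.
by case tN: (t N) => /=; rewrite ?addn0 ?add0n tN.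
Qed.

Definition block (s : nat) (t : nat -> bool) : nat -> bool :=
  fun k => if (k < s)%N then false else if k == s then true
           else if k == s.+1 then false else t (k - s.+2)%N.

Lemma block_lt s t k : (k < s)%N -> block s t k = false.
Proof. by rewrite /block => ->. Qed.

Lemma block_s s t : block s t s.
Proof. by rewrite /block ltnn eqxx. Qed.

Lemma block_shift s t q : block s t (s.+2 + q) = t q.
Proof.
rewrite /block.
have -> : (s.+2 + q < s)%N = false by lia.
have -> : (s.+2 + q == s)%N = false by lia.
have -> : (s.+2 + q == s.+1)%N = false by lia.
by rewrite addKn.
Qed.

Lemma block_trueP s t p :
  block s t p -> p = s \/ exists2 q, p = (s.+2 + q)%N & t q.
Proof.
rewrite /block; case: ltnP => // sp; case: eqVneq => [->|ps]; first by left.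
case: eqVneq => // ps1 tp; right; exists (p - s.+2)%N => //; lia.
Qed.

Lemma count_block s t q :
  (\sum_(i < s.+2 + q) block s t i = 1 + \sum_(i < q) t i)%N.
Proof.
rewrite big_split_ord /=; congr (_ + _)%N; last first.
  by apply: eq_bigr => i _; rewrite block_shift.
rewrite !big_ord_recr /= big1 => [|i _]; last by rewrite block_lt.
have -> : block s t s.+1 = false.
  by rewrite /block ltnNge leqnSn /= (gtn_eqF (ltnSn s)) eqxx.
by rewrite block_s.
Qed.

Lemma block_inf_ones s t : inf_ones t -> inf_ones (block s t).
Proof.
move=> ones N; have [m [Nm tm]] := ones N.
by exists (s.+2 + m)%N; rewrite block_shift; split => //; lia.
Qed.

(* Decoding: for even s, rho reads the marker 1 at s as the letter 0 and then
   recovers the encoded word letter by letter. *)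
Lemma rho_block s v : ~~ odd s -> v 0%N = false ->
  rho (block s (pair_code (fun j => v j.+1))) = v.
Proof.
move=> even_s v0; apply: funext => n; rewrite /rho.
set t := pair_code _.
have odd_shift q : odd (s.+2 + q) = odd q.
  by rewrite oddD /= (negbTE even_s).
case: n => [|j].
  rewrite v0; apply: asboolF => -[p [bp cnt op]].
  case: (block_trueP bp) => [ps|[q pq _]]; first by rewrite ps (negbTE even_s) in op.
  by rewrite pq count_block in cnt.
case vj: (v j.+1).
  apply: asboolT; exists (s.+2 + j.*2.+1)%N; split.
  - by rewrite block_shift /t /pair_code /= odd_double uphalf_double.
  - by rewrite count_block count_pair_code_odd vj addn0.
  - by rewrite odd_shift /= odd_double.
apply: asboolF => -[p [bp cnt op]].
case: (block_trueP bp) => [ps|[q pq tq]]; first by rewrite ps (negbTE even_s) in op.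
rewrite pq odd_shift in op; rewrite pq count_block in cnt.
move: cnt tq; rewrite -(odd_double_half q) op count_pair_code_odd /t /pair_code /=.
rewrite odd_double uphalf_double /=.
case vq: (v q./2.+1) => //= cnt _.
have qj : q./2 = j by lia.
by rewrite qj vj in vq.
Qed.

(* [code_word f d i] is the expansion of the point visited at time i, when
   d further steps are encoded: 0^(2 f(i) + 2) 1 0 followed by the pair code
   of [code_word f (d-1) (i+1)] with its leading 0 removed (of the zero
   word when d = 0). *)
Fixpoint code_word (f : nat -> nat) (d i : nat) : nat -> bool :=
  block (f i).*2.+2
    (pair_code (fun j => if d is d'.+1 then code_word f d' i.+1 j.+1 else false)).

Lemma code_word_block f d i :
  exists t, code_word f d i = block (f i).*2.+2 (pair_code t).
Proof. by case: d => [|d]; eexists. Qed.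

Lemma code_word_inf_ones f d i : inf_ones (code_word f d i).
Proof.
by have [t ->] := code_word_block f d i; apply/block_inf_ones/pair_code_inf_ones.
Qed.

Lemma rho_code_word f d i : rho (code_word f d.+1 i) = code_word f d i.+1.
Proof.
apply: rho_block; first by rewrite /= odd_double.
by have [t ->] := code_word_block f d i.+1; rewrite block_lt.
Qed.

Section BinaryExpansions.
Variable R : realType.
Implicit Types (w b c : nat -> bool) (x y : R).

Definition partial_val w (N : nat) : R := \sum_(k < N) ((w k)%:R / 2 ^+ k.+1 : R).

Lemma pow2N_gt0 k : 0 < 2 ^- k :> R.
Proof. by rewrite invr_gt0 exprn_gt0. Qed.

Lemma pow2N_halve k : 2 ^- k.+1 + 2 ^- k.+1 = 2 ^- k :> R.
Proof.
have : 2 ^+ k != 0 :> R by rewrite expf_neq0 // pnatr_eq0.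
by rewrite exprS => ?; field.
Qed.

Lemma pow2N_le k l : (k <= l)%N -> 2 ^- l <= 2 ^- k :> R.
Proof.
move=> kl; rewrite -(subnKC kl); elim: (l - k)%N => [|m IH]; first by rewrite addn0.
by apply: le_trans IH; rewrite addnS -(pow2N_halve (k + m)) lerDl ltW ?pow2N_gt0.
Qed.

Lemma partial_valS w N : partial_val w N.+1 = partial_val w N + (w N)%:R * 2 ^- N.+1.
Proof. by rewrite /partial_val big_ord_recr. Qed.

Lemma digit_ge0 w N : 0 <= (w N)%:R * 2 ^- N.+1 :> R.
Proof. by rewrite mulr_ge0 // ltW ?pow2N_gt0. Qed.

Lemma digit_le w N : (w N)%:R * 2 ^- N.+1 <= 2 ^- N.+1 :> R.
Proof. by case: (w N) => /=; rewrite ?mul1r // mul0r ltW ?pow2N_gt0. Qed.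

Lemma partial_val_nondecr w : {homo partial_val w : n m / (n <= m)%N >-> n <= m}.
Proof.
move=> n m nm; rewrite -(subnKC nm); elim: (m - n)%N => [|k IH]; first by rewrite addn0.
by rewrite addnS partial_valS; apply: le_trans IH _; rewrite lerDl digit_ge0.
Qed.

Lemma partial_val_tail w N k :
  partial_val w (N + k) <= partial_val w N + 2 ^- N - 2 ^- (N + k).
Proof.
elim: k => [|k IH]; first by rewrite addn0 addrK.
rewrite addnS partial_valS; apply: le_trans (lerD IH (digit_le w _)) _.
by rewrite -(pow2N_halve (N + k)) opprD !addrA addrNK.
Qed.

Lemma partial_val_le1 w N : partial_val w N <= 1.
Proof.
have := partial_val_tail w 0 N; rewrite add0n /partial_val big_ord0 add0r expr0 invr1.
by move=> tail; apply: le_trans tail _; rewrite lerBlDr lerDl ltW ?pow2N_gt0.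
Qed.

Lemma bin_val_cvg w : partial_val w @ \oo --> bin_val w.
Proof.
have cv : cvgn (partial_val w).
  apply/cvg_ex; eexists; apply: nondecreasing_cvgn; first exact: partial_val_nondecr.
  by exists 1 => _ [n _ <-]; exact: partial_val_le1.
exact: cv.
Qed.

Lemma expansion_bounds w x : partial_val w @ \oo --> x ->
  [/\ forall N, partial_val w N <= x, forall N, x <= partial_val w N + 2 ^- N &
      forall m, w m -> partial_val w m + 2 ^- m.+1 <= x].
Proof.
move=> cvx; have lim_x : limn (partial_val w) = x by exact: cvg_lim.
have cv : cvgn (partial_val w) by apply/cvg_ex; exists x.
have lower N : partial_val w N <= x.
  by rewrite -lim_x; apply: nondecreasing_cvgn_le => //; exact: partial_val_nondecr.
split => // [N|m wm].
- rewrite -lim_x; apply: limr_le => //; near=> n.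
  have Nn : (N <= n)%N by near: n; exists N.
  rewrite -(subnKC Nn); apply: le_trans (partial_val_tail w N _) _.
  by rewrite lerBlDr lerDl ltW ?pow2N_gt0.
- by apply: le_trans (lower m.+1); rewrite partial_valS wm mul1r.
Unshelve. all: by end_near.
Qed.

Lemma first_difference_lt b c n x y :
  (forall m, (m < n)%N -> b m = c m) -> b n -> ~~ c n -> inf_ones b ->
  partial_val b @ \oo --> x -> partial_val c @ \oo --> y -> y < x.
Proof.
move=> agree bn cn ones cvx cvy.
have [m [nm bm]] := ones n.+1.
have [_ _ x_ge] := expansion_bounds cvx.
have [_ y_le _] := expansion_bounds cvy.
have same_prefix : partial_val b n = partial_val c n :> R.
  by rewrite /partial_val; apply: eq_bigr => i _; rewrite agree.
have := x_ge m bm; have := y_le n.+1; have := partial_val_nondecr b nm.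
rewrite !partial_valS bn (negbTE cn) mul1r mul0r addr0 same_prefix.
by have := pow2N_gt0 m.+1; lra.
Qed.

Lemma expansion_unique x b c :
  nonterm_expansion x b -> nonterm_expansion x c -> b = c.
Proof.
move=> [b_ones cvb] [c_ones cvc]; apply: funext => n; elim/ltn_ind: n => n IH.
case bn: (b n); case cn: (c n) => //; exfalso.
- by have := first_difference_lt IH bn (negbT cn) b_ones cvb cvc; rewrite ltxx.
- have IH' m : (m < n)%N -> c m = b m by move=> /IH ->.
  by have := first_difference_lt IH' cn (negbT bn) c_ones cvc cvb; rewrite ltxx.
Qed.

Lemma beta_bin_val w : inf_ones w -> beta (bin_val w : R) = w.
Proof.
move=> ones; have exp_w : nonterm_expansion (bin_val w : R) w.
  by split => //; exact: bin_val_cvg.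
by apply: xget_unique => // c /expansion_unique/(_ exp_w).
Qed.

Lemma bin_val_in01 w : 0 <= (bin_val w : R) <= 1.
Proof.
have [lower upper _] := expansion_bounds (@bin_val_cvg w).
have := lower 0%N; have := upper 0%N.
by rewrite /partial_val big_ord0 expr0 invr1 add0r => -> ->.
Qed.

Lemma Rmap_bin_val w : inf_ones w -> Rmap (bin_val w : R) = bin_val (rho w).
Proof.
move=> ones; rewrite /Rmap beta_bin_val // ifF //; apply/negbTE.
have [m [_ wm]] := ones 0%N.
have [_ _ x_ge] := expansion_bounds (@bin_val_cvg w).
have prefix_ge0 : 0 <= partial_val w m.
  by have := partial_val_nondecr w (leq0n m); rewrite {1}/partial_val big_ord0.
by rewrite gt_eqF //; apply: lt_le_trans (x_ge m wm); exact: ltr_pwDr.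
Qed.

Lemma block_val_bounds s t : 2 ^- s.+1 <= (bin_val (block s t) : R) <= 2 ^- s.
Proof.
have [_ upper x_ge] := expansion_bounds (@bin_val_cvg (block s t)).
have zero_prefix : partial_val (block s t) s = 0 :> R.
  by rewrite /partial_val big1 // => k _; rewrite block_lt // mul0r.
by have := x_ge s (block_s s t); have := upper s; rewrite zero_prefix !add0r => -> ->.
Qed.

Lemma block_val_gap s s' t t' : (s.+2 <= s')%N ->
  2 ^- s.+2 <= bin_val (block s t) - bin_val (block s' t') :> R.
Proof.
move=> ss'; have /andP[lo _] := block_val_bounds s t.
have /andP[_ up] := block_val_bounds s' t'.
have := pow2N_le ss'; have := pow2N_halve s.+1; lra.
Qed.

End BinaryExpansions.

Section SeparatedSets.
Variable R : realType.

Lemma iter_code_word f n i : (i <= n)%N ->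
  iter i Rmap (bin_val (code_word f n 0) : R) = bin_val (code_word f (n - i) i).
Proof.
elim: i => [|i IH] le_in; first by rewrite subn0.
rewrite iterS IH ?(ltnW le_in) //.
have -> : (n - i = (n - i.+1).+1)%N by lia.
by rewrite Rmap_bin_val ?rho_code_word //; exact: code_word_inf_ones.
Qed.

Lemma code_word_sep f g d d' i K : f i != g i -> (f i < K)%N -> (g i < K)%N ->
  2 ^- K.*2.+2 <= `|bin_val (code_word f d i) - bin_val (code_word g d' i) : R|.
Proof.
have gap f1 f2 d1 d2 : (f1 i < f2 i)%N -> (f2 i < K)%N ->
    2 ^- K.*2.+2 <= bin_val (code_word f1 d1 i) - bin_val (code_word f2 d2 i) :> R.
  move=> lt12 lt2K; have [t1 ->] := code_word_block f1 d1 i.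
  have [t2 ->] := code_word_block f2 d2 i.
  have gap_len : ((f1 i).*2.+2.+2 <= (f2 i).*2.+2)%N by lia.
  apply: le_trans (block_val_gap R _ _ gap_len); apply: pow2N_le; lia.
move=> neq fK gK; case: (ltngtP (f i) (g i)) => [lt|gt|eq].
- exact: le_trans (gap _ _ d d' lt gK) (ler_norm _).
- by rewrite distrC; exact: le_trans (gap _ _ d' d gt fK) (ler_norm _).
- by rewrite eq eqxx in neq.
Qed.

Definition coded_point K n (f : {ffun 'I_n.+1 -> 'I_K}) : R :=
  bin_val (code_word (fun i => f (inord i)) n 0).

Lemma coded_points_sep K n (f g : {ffun 'I_n.+1 -> 'I_K}) : f != g ->
  exists i : 'I_n.+1,
    2 ^- K.*2.+2 <= `|iter i Rmap (coded_point f) - iter i Rmap (coded_point g)|.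
Proof.
move=> neq; have [i neq_i] : exists i, f i != g i.
  by apply/existsP; apply: contraNT neq => /existsPn eq_fg; apply/eqP/ffunP => i;
     apply/eqP/negPn.
exists i; rewrite /coded_point !iter_code_word ?(leq_ord i) //.
by apply: code_word_sep; rewrite /= ?inord_val ?ltn_ord.
Qed.

Lemma coded_point_inj K n : injective (@coded_point K n).
Proof.
move=> f g eq_fg; apply/eqP; apply: contraT => neq.
have [i] := coded_points_sep neq; rewrite eq_fg subrr normr0.
by rewrite leNgt pow2N_gt0.
Qed.

Lemma r_sep_ge K n (eps : R) : eps <= 2 ^- K.*2.+2 ->
  (((K ^ n.+1)%N)%:R%:E <= r_sep n eps)%E.
Proof.
move=> small_eps; apply: ereal_sup_ubound.
exists [seq coded_point f | f <- enum {: {ffun 'I_n.+1 -> 'I_K}}]; last first.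
  by rewrite size_map -cardE card_ffun !card_ord.
split.
- by rewrite map_inj_uniq ?enum_uniq //; exact: coded_point_inj.
- by move=> x /mapP[f _ ->]; exact: bin_val_in01.
- move=> x y /mapP[f _ ->] /mapP[g _ ->] neq.
  have neq_fg : f != g by apply: contraNneq neq => ->.
  have [i sep_i] := coded_points_sep neq_fg.
  apply: le_trans small_eps (le_trans sep_i _).
  rewrite /dn; exact: le_bigmax.
Qed.

End SeparatedSets.

Section GrowthRate.
Variable R : realType.
Local Open Scope ereal_scope.

Lemma normalized_log_ge K n (eps : R) : (0 < K)%N -> (0 < n)%N ->
  (eps <= 2 ^- K.*2.+2)%R ->
  (ln (K%:R : R))%:E <= ((n%:R)^-1)%:E * lne (r_sep n eps).
Proof.
move=> K_gt0 n_gt0 small_eps.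
have lnK_ge0 : (0 <= ln (K%:R : R))%R by rewrite ln_ge0 // ler1n.
have log_bound : (ln (K%:R : R) *+ n.+1)%:E <= lne (r_sep n eps).
  have card_bound := r_sep_ge n small_eps.
  rewrite -lnXn ?ltr0n // -natrX -lne_EFin ?ltr0n ?expn_gt0 ?K_gt0 //.
  rewrite lee_lne // in_itv /= ?lee_fin ?ler0n ?leey //.
  by rewrite (le_trans _ card_bound) // lee_fin ler0n.
apply: le_trans (lee_wpmul2l _ log_bound); last by rewrite lee_fin invr_ge0 ler0n.
rewrite -EFinM lee_fin.
have n_neq0 : (n%:R : R) != 0%R by rewrite pnatr_eq0 -lt0n.
have -> : ((n%:R)^-1 * (ln (K%:R : R) *+ n.+1)
          = ln (K%:R : R) + ln (K%:R : R) * (n%:R)^-1 :> R)%R.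
  by rewrite mulrSr -mulr_natr; field.
by rewrite lerDl mulr_ge0 // invr_ge0 ler0n.
Qed.

Lemma growth_ge K (eps : R) : (0 < K)%N -> (eps <= 2 ^- K.*2.+2)%R ->
  (ln (K%:R : R))%:E <= growth eps.
Proof.
move=> K_gt0 small_eps; rewrite /growth limn_esup_lim.
apply: lime_ge; first exact: is_cvg_esups.
near=> n; have n_gt0 : (0 < n)%N by near: n; exists 1%N.
apply: le_trans (normalized_log_ge K_gt0 n_gt0 small_eps) _.
by apply: ereal_sup_ubound; exists n => /=.
Unshelve. all: by end_near.
Qed.

End GrowthRate.

(* Given A, take K > exp A: for eps <= 2^-(2K+2) the growth rate is >= A. *)
Theorem proposition6p11 (R : realType) :
  (@growth R) x @[x --> 0^'+] --> +oo%E.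
Proof.
apply/cvgeyPge => A.
pose K := (Num.truncn (expR A)).+1.
have A_le_lnK : A <= ln (K%:R : R).
  rewrite -[X in X <= _]expRK ler_ln ?posrE ?expR_gt0 ?ltr0n //.
  exact/ltW/truncnS_gt.
near=> eps.
have small_eps : eps <= 2 ^- K.*2.+2.
  by apply/ltW; near: eps; apply: nbhs_right_lt; exact: pow2N_gt0.
by apply: le_trans (growth_ge (ltn0Sn _) small_eps); rewrite lee_fin.
Unshelve. all: by end_near.
Qed.
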